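(* Let $\Sigma$ be a finite alphabet, let $m = m_1 m_2 \cdots m_n \in \Sigma^n$ be a message with $n \ge 2$, and let $\alpha,\beta,\gamma \in \Sigma$ be pairwise distinct symbols. Let $m' = GCT(\alpha\beta\leftrightarrow\alpha\gamma, m)$ be the generalized context transformation of $m$ (defined in the context below). Let $p_0$ and $p_1$ be the empirical symbol distributions of $m$ and $m'$, respectively. Put $p_{0,\max} = \max\{p_0(\beta), p_0(\gamma)\}$ and $p_{1,\max} = \max\{p_1(\beta), p_1(\gamma)\}$. If $p_{1,\max} > p_{0,\max}$, then $H(m') < H(m)$, i.e. the transformation strictly reduces the zero-order (Shannon) entropy.
   Context: The generalized context transformation $GCT(\alpha\beta\leftrightarrow\alpha\gamma, m)$ exchanges all digrams $\alpha\beta$ for $\alpha\gamma$ and vice versa throughout the message $m$. When $\alpha \notin \{\beta,\gamma\}$, it is the message $m' = m'_1\cdots m'_n$ given by $m'_1 = m_1$ and, for $2 \le i \le n$: - $m'_i = \gamma$ if $m_{i-1} = \alpha$ and $m_i = \beta$; - $m'_i = \beta$ if $m_{i-1} = \alpha$ and $m_i = \gamma$; - $m'_i = m_i$ otherwise. For a message $w \in \Sigma^n$, its empirical symbol distribution is $p(x) = |\{i : w_i = x\}|/n$ for $x \in \Sigma$. Its zero-order (Shannon) entropy is $H(w) = -\sum_{x\in\Sigma} p(x)\log_2 p(x)$, with the convention $0\log_2 0 = 0$. *)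

From mathcomp Require Import all_boot.
From Stdlib Require Import Reals.
Set Implicit Arguments. Unset Strict Implicit. Unset Printing Implicit Defensive.

Section GCT.
Variable T : eqType.
Variables a b c : T.

(* one step: symbol y preceded (in the ORIGINAL message) by prev *)
Definition gct_sym (prev y : T) : T :=
  if prev == a then (if y == b then c else if y == c then b else y) else y.

Fixpoint gct_aux (prev : T) (s : seq T) : seq T :=
  match s with
  | [::] => [::]
  | y :: t => gct_sym prev y :: gct_aux y t
  end.

Definition gct (m : seq T) : seq T :=
  match m with
  | [::] => [::]
  | x :: s => x :: gct_aux x s
  end.
End GCT.

Definition log2 (x : R) : R := (ln x / ln 2)%R.

Definition plogp (x : R) : R :=
  if Req_EM_T x 0 then 0%R else (x * log2 x)%R.

Definition emp {T : eqType} (w : seq T) (x : T) : R :=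
  (INR (count_mem x w) / INR (size w))%R.

Definition entropy {T : finType} (w : seq T) : R :=
  (- foldr Rplus 0%R (map (fun x => plogp (emp w x)) (enum T)))%R.

(* GCT only exchanges occurrences of b and c, so it fixes the frequency of
   every other symbol and the total p(b) + p(c).  The entropy therefore
   changes only through the two terms p(b) log p(b) + p(c) log p(c), whose sum
   is, by strict convexity of x ln x, strictly increasing as the pair with a
   fixed sum is spread apart, i.e. as its maximum grows. *)
From mathcomp Require Import all_boot.
From Stdlib Require Import Reals Lra.

Section GctCounts.
Variable T : eqType.
Variables a b c : T.

Lemma size_gct_aux prev s : size (gct_aux a b c prev s) = size s.
Proof. by elim: s prev => //= y t IH prev; rewrite IH. Qed.

Lemma size_gct s : size (gct a b c s) = size s.
Proof. by case: s => //= x s; rewrite size_gct_aux. Qed.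

Lemma gct_sym_eq_other x prev y : x != b -> x != c ->
  (gct_sym a b c prev y == x) = (y == x).
Proof.
move=> xb xc; rewrite /gct_sym; case: (prev == a) => //.
case: (eqVneq y b) => [->|_]; first by rewrite ![_ == x]eq_sym (negbTE xb) (negbTE xc).
by case: (eqVneq y c) => [->|_] //; rewrite ![_ == x]eq_sym (negbTE xb) (negbTE xc).
Qed.

Lemma count_gct_aux_other x prev s : x != b -> x != c ->
  count_mem x (gct_aux a b c prev s) = count_mem x s.
Proof.
by move=> xb xc; elim: s prev => //= y t IH prev; rewrite IH gct_sym_eq_other.
Qed.

Lemma count_gct_other x s : x != b -> x != c ->
  count_mem x (gct a b c s) = count_mem x s.
Proof. by move=> xb xc; case: s => //= y s; rewrite count_gct_aux_other. Qed.

Hypothesis bc : b != c.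

Lemma gct_sym_bc prev y :
  ((gct_sym a b c prev y == b) + (gct_sym a b c prev y == c) =
   (y == b) + (y == c))%N.
Proof.
rewrite /gct_sym; case: (prev == a) => //.
case: (eqVneq y b) => [->|yb]; first by rewrite eqxx eq_sym (negbTE bc) addnC.
case: (eqVneq y c) => [_|yc]; first by rewrite eqxx (negbTE bc).
by rewrite (negbTE yb) (negbTE yc).
Qed.

Lemma count_gct_aux_bc prev s :
  (count_mem b (gct_aux a b c prev s) + count_mem c (gct_aux a b c prev s) =
   count_mem b s + count_mem c s)%N.
Proof.
by elim: s prev => //= y t IH prev; rewrite addnACA IH gct_sym_bc addnACA.
Qed.

Lemma count_gct_bc s :
  (count_mem b (gct a b c s) + count_mem c (gct a b c s) =
   count_mem b s + count_mem c s)%N.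
Proof. by case: s => //= y s; rewrite addnACA count_gct_aux_bc addnACA. Qed.

End GctCounts.

Open Scope R_scope.

Definition xlnx (x : R) : R := x * ln x.

Lemma plogp_xlnx x : plogp x = xlnx x / ln 2.
Proof.
rewrite /plogp /xlnx /log2; case: (Req_EM_T x 0) => [x0|_] /=.
  by rewrite x0 /Rdiv !Rmult_0_l.
by rewrite /Rdiv Rmult_assoc.
Qed.

Lemma ln_div u v : 0 < u -> 0 < v -> ln (u / v) = ln u - ln v.
Proof.
move=> u0 v0; rewrite /Rdiv ln_mult ?ln_Rinv //; exact: Rinv_0_lt_compat.
Qed.

(* Both tangent-line bounds reduce to [ln t <= t - 1] at [t = u / v]. *)
Lemma xlnx_tangent_le u v : 0 < u -> 0 <= v ->
  xlnx u + (ln u + 1) * (v - u) <= xlnx v.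
Proof.
move=> u0 v0; rewrite /xlnx; case: (Req_dec v 0) => [->|vn0]; first nra.
have vp : 0 < v by lra.
have h := exp_ineq1_le (ln (u / v)); rewrite exp_ln in h; last exact: Rdiv_lt_0_compat.
rewrite ln_div // in h.
have : v * (ln u - ln v) <= v * (u / v - 1) by apply: Rmult_le_compat_l; lra.
have -> : v * (u / v - 1) = u - v by field; lra.
nra.
Qed.

Lemma xlnx_tangent_lt u v : 0 < u -> 0 < v -> u <> v ->
  xlnx u + (ln u + 1) * (v - u) < xlnx v.
Proof.
move=> u0 v0 uv; rewrite /xlnx.
have uv_ne1 : u / v <> 1 by move=> e; apply: uv; field_simplify_eq in e; lra.
have h := exp_ineq1 (ln (u / v)) (ln_neq_0 _ uv_ne1 (Rdiv_lt_0_compat _ _ u0 v0)).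
rewrite exp_ln in h; last exact: Rdiv_lt_0_compat.
rewrite ln_div // in h.
have : v * (ln u - ln v) < v * (u / v - 1) by apply: Rmult_lt_compat_l; lra.
have -> : v * (u / v - 1) = u - v by field; lra.
nra.
Qed.

(* Add the tangent bounds at [u] and at [s]: as [v - u = s - s'], what remains
   is [(v - u) (ln u - ln s) >= 0]. *)
Lemma xlnx_spread_lt s u s' v : 0 <= s' -> s <= u -> u < v -> s + u = s' + v ->
  xlnx s + xlnx u < xlnx s' + xlnx v.
Proof.
move=> s'0 su uv E.
have s0 : 0 < s by lra.
have Hv : xlnx u + (ln u + 1) * (v - u) < xlnx v by apply: xlnx_tangent_lt; lra.
have Hs' : xlnx s + (ln s + 1) * (s' - s) <= xlnx s' by apply: xlnx_tangent_le.
have Hln : ln s <= ln u.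
  by case: (Req_dec s u) => [->|?]; [lra | left; apply: ln_increasing; lra].
have : (v - u) * ln s <= (v - u) * ln u by apply: Rmult_le_compat_l; lra.
nra.
Qed.

Lemma xlnx_pair_lt_Rmax x y x' y' : 0 <= x -> 0 <= y -> 0 <= x' -> 0 <= y' ->
  x + y = x' + y' -> Rmax x y < Rmax x' y' ->
  xlnx x + xlnx y < xlnx x' + xlnx y'.
Proof.
move=> x0 y0 x'0 y'0 E; rewrite /Rmax.
case: (Rle_dec x y); case: (Rle_dec x' y') => h1 h2 H.
- have := @xlnx_spread_lt x y x' y'; lra.
- have := @xlnx_spread_lt x y y' x'; lra.
- have := @xlnx_spread_lt y x x' y'; lra.
- have := @xlnx_spread_lt y x y' x'; lra.
Qed.

Lemma foldr_Rplus_sub (T : Type) (F G : T -> R) l :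
  foldr Rplus 0 (map F l) - foldr Rplus 0 (map G l) =
  foldr Rplus 0 (map (fun x => F x - G x) l).
Proof. by elim: l => [|x l IH] /=; lra. Qed.

Lemma foldr_Rplus_supp2 (T : eqType) (D : T -> R) b c l : b != c -> uniq l ->
  (forall x, x != b -> x != c -> D x = 0) ->
  foldr Rplus 0 (map D l) =
  (if b \in l then D b else 0) + (if c \in l then D c else 0).
Proof.
move=> bc + D0; elim: l => [|x l IH] /=; first lra.
case/andP=> xl ul; rewrite IH // !in_cons.
case: (eqVneq x b) => [e|xb].
  by subst x; rewrite (negbTE xl) eq_sym (negbTE bc) /=; lra.
case: (eqVneq x c) => [e|xc]; last by rewrite D0 //=; lra.
by subst x; rewrite (negbTE xl) /=; lra.
Qed.

Lemma emp_ge0 (T : eqType) (w : seq T) x : 0 <= emp w x.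
Proof.
rewrite /emp /Rdiv; apply: Rmult_le_pos; first exact: pos_INR.
case: (Req_dec (INR (size w)) 0) => [->|h]; first by rewrite Rinv_0; lra.
by left; apply: Rinv_0_lt_compat; have := pos_INR (size w); lra.
Qed.

Lemma entropy_lt_of_two_symbols (T : finType) (w w' : seq T) b c : b != c ->
  (forall x, x != b -> x != c -> emp w' x = emp w x) ->
  xlnx (emp w b) + xlnx (emp w c) < xlnx (emp w' b) + xlnx (emp w' c) ->
  entropy w' < entropy w.
Proof.
move=> bc Heq Hlt.
have ln2 : 0 < ln 2 by have := ln_lt_2; lra.
suff E : entropy w - entropy w' =
    (xlnx (emp w' b) + xlnx (emp w' c) - (xlnx (emp w b) + xlnx (emp w c))) / ln 2.
  by apply/Rlt_0_minus; rewrite E; apply: Rdiv_lt_0_compat; lra.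
rewrite /entropy.
have -> : forall A B : R, - A - - B = B - A by move=> A B; ring.
rewrite foldr_Rplus_sub (@foldr_Rplus_supp2 _ _ b c _ bc (enum_uniq T)).
  by rewrite !mem_enum /= !plogp_xlnx; field; lra.
by move=> x xb xc /=; rewrite Heq //; ring.
Qed.

Close Scope R_scope.

Theorem theorem1 (Sigma : finType) (m : seq Sigma) (a b c : Sigma) :
  (2 <= size m)%N -> a != b -> a != c -> b != c ->
  (Rmax (emp (gct a b c m) b) (emp (gct a b c m) c) >
   Rmax (emp m b) (emp m c))%R ->
  (entropy (gct a b c m) < entropy m)%R.
Proof.
move=> _ _ _ bc Hmax.
apply: (@entropy_lt_of_two_symbols _ m _ b c bc).
  by move=> x xb xc; rewrite /emp size_gct count_gct_other.
apply: xlnx_pair_lt_Rmax => //; try exact: emp_ge0.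
rewrite /emp size_gct /Rdiv -!Rmult_plus_distr_r -!plus_INR.
by congr (INR _ * _)%R; apply/esym/count_gct_bc.
Qed.
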